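(* Every sequence $a_1,a_2,\dotsc$ in a semigroup has a sumsequence $b_1,b_2,\dotsc$ of one of the following two types: (1) $b_n+b_m=b_n$ for all natural numbers $n<m$; or (2) for every natural number $n$, $\mathrm{FS}(b_1,\dotsc,b_n)\cap(\mathrm{FS}(b_1,\dotsc,b_n)+b_{n+1})=\emptyset$.
   Context: Semigroups are written additively and are not assumed commutative. For a sequence $a_1,a_2,\dotsc$ and a finite nonempty index set $F=\{i_1<\dotsb<i_m\}$, $a_F:=a_{i_1}+\dotsb+a_{i_m}$; $F_1<F_2$ means every element of $F_1$ is smaller than every element of $F_2$. A sumsequence of $a_1,a_2,\dotsc$ is a sequence $a_{F_1},a_{F_2},\dotsc$ for nonempty finite index sets $F_1<F_2<\dotsb$. $\mathrm{FS}(b_1,\dotsc,b_n):=\{b_{i_1}+\dotsb+b_{i_m}: m\ge1,\ i_1<\dotsb<i_m\le n\}$, and for a set $X$ and element $c$, $X+c:=\{x+c:x\in X\}$. *)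

(* Semigroups are given as a carrier type S with a binary
   operation op (written additively in the paper, not assumed commutative)
   and an associativity hypothesis. Sequences are indexed from 0. *)
From Stdlib Require Import List Arith Sorting.Sorted.
Import ListNotations.

(* a_F for a nonempty finite index set F, given as a strictly increasing list
   i1 < ... < im : a_{i1} + ... + a_{im} (left to right). *)
Definition idx_sum {T : Type} (op : T -> T -> T) (a : nat -> T) (i : nat)
  (l : list nat) : T :=
  fold_left (fun acc j => op acc (a j)) l (a i).

Definition incr_list (i : nat) (t : list nat) : Prop :=
  StronglySorted lt (i :: t).

Definition blocks_lt (F G : nat * list nat) : Prop :=
  forall x y, In x (fst F :: snd F) -> In y (fst G :: snd G) -> x < y.

(* b is a sumsequence of a: there are nonempty finite index sets
   F_0 < F_1 < ... (each F_k = fst (F k) :: snd (F k), strictly increasing)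
   with b k = a_{F_k}. *)
Definition sumsequence {T : Type} (op : T -> T -> T) (a b : nat -> T) : Prop :=
  exists F : nat -> nat * list nat,
    (forall k, incr_list (fst (F k)) (snd (F k))) /\
    (forall k, blocks_lt (F k) (F (S k))) /\
    (forall k, b k = idx_sum op a (fst (F k)) (snd (F k))).

Definition in_FS {T : Type} (op : T -> T -> T) (b : nat -> T) (n : nat) (x : T) : Prop :=
  exists (i : nat) (t : list nat),
    incr_list i t /\ (forall j, In j (i :: t) -> j < n) /\ x = idx_sum op b i t.

(* If some block sumsequence of a is of type (2) we are done.  Otherwise,
   for the block sums x of any block sequence, call a cut point j > p good if
   no relation x_G = x_G' + x_[p,j) holds between blocks G, G' below p; if
   every p had a good cut, the segments between successive good cuts would
   form a sumsequence of type (2).  So some p has none, and a pigeonhole over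
   the finitely many pairs (G, G') gives infinitely many j > p with the same
   relation; then H = G' ++ [p, j_0) absorbs every x_[j_m, j_(m+1)), because
   x_H + x_[j_m, j_(m+1)) = x_G' + x_[p, j_(m+1)) = x_G = x_H.  Repeating this
   inside the absorbed tail blocks, the absorbing blocks of successive stages
   give a sumsequence of type (1). *)

From Stdlib Require Import List Arith Lia Sorting.Sorted Classical ClassicalEpsilon
  FunctionalExtensionality.
Import ListNotations.

Lemma StronglySorted_app (l1 l2 : list nat) :
  StronglySorted lt l1 -> StronglySorted lt l2 ->
  (forall x y, In x l1 -> In y l2 -> x < y) -> StronglySorted lt (l1 ++ l2).
Proof.
  induction l1 as [|i l1 IH]; intros H1 H2 H12; simpl; auto.
  apply StronglySorted_inv in H1 as [H1 Hi]. constructor.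
  - apply IH; auto. intros; apply H12; simpl; auto.
  - apply Forall_app. split; auto. apply Forall_forall. intros y Hy. apply H12; simpl; auto.
Qed.

Lemma concat_map_nonempty (D : nat -> list nat) (L : list nat) :
  L <> [] -> (forall k, In k L -> D k <> []) -> concat (map D L) <> [].
Proof.
  destruct L as [|k L]; [congruence|]. intros _ HD. simpl. intro E.
  apply app_eq_nil in E as [E _]. apply (HD k); simpl; auto.
Qed.

Lemma in_concat_map (D : nat -> list nat) (L : list nat) (z : nat) :
  In z (concat (map D L)) -> exists k, In k L /\ In z (D k).
Proof.
  intros H. apply in_concat in H as [l [Hl Hz]]. apply in_map_iff in Hl as [k [<- Hk]]. eauto.
Qed.

Lemma StronglySorted_concat (D : nat -> list nat) (L : list nat) :
  StronglySorted lt L -> (forall k, In k L -> StronglySorted lt (D k)) ->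
  (forall k k' y z, In k L -> In k' L -> k < k' -> In y (D k) -> In z (D k') -> y < z) ->
  StronglySorted lt (concat (map D L)).
Proof.
  induction L as [|k L IH]; intros HL HD HX; simpl; [constructor|].
  apply StronglySorted_inv in HL as [HL Hk]. rewrite Forall_forall in Hk.
  apply StronglySorted_app.
  - apply HD; simpl; auto.
  - apply IH; auto; [intros; apply HD; simpl; auto|].
    intros k1 k2 y z H1 H2; apply HX; simpl; auto.
  - intros y z Hy Hz. apply in_concat_map in Hz as [k' [Hk' Hz]].
    apply (HX k k'); simpl; auto.
Qed.

Lemma increasing_le (p : nat -> nat) :
  (forall k, p k < p (S k)) -> forall k k', k <= k' -> p k <= p k'.
Proof. intros Hp k k' Hk. induction Hk as [|k' _ IH]; [lia|]. specialize (Hp k'). lia. Qed.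

Definition interval (i j : nat) : list nat := seq i (j - i).

Lemma in_interval (i j y : nat) : In y (interval i j) <-> i <= y < j.
Proof. unfold interval. rewrite in_seq. lia. Qed.

Lemma interval_sorted (i j : nat) : StronglySorted lt (interval i j).
Proof.
  unfold interval. generalize (j - i) as n. intros n. clear j. revert i.
  induction n as [|n IH]; intros i; simpl; constructor; auto.
  apply Forall_forall. intros y Hy. apply in_seq in Hy. lia.
Qed.

Lemma interval_nonempty (i j : nat) : i < j -> interval i j <> [].
Proof. unfold interval. destruct (j - i) eqn:E; [lia|discriminate]. Qed.

Lemma interval_app (i j k : nat) : i <= j <= k -> interval i k = interval i j ++ interval j k.
Proof.
  intros Hijk. unfold interval. replace (k - i) with ((j - i) + (k - j)) by lia.
  rewrite seq_app. do 2 f_equal. lia.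
Qed.

Fixpoint sublists (l : list nat) : list (list nat) :=
  match l with
  | [] => [[]]
  | i :: t => map (cons i) (sublists t) ++ sublists t
  end.

Lemma in_sublists (l G : list nat) :
  StronglySorted lt l -> StronglySorted lt G -> incl G l -> In G (sublists l).
Proof.
  revert G. induction l as [|i t IH]; intros G Hl HG HGl.
  - destruct G as [|y G]; [simpl; auto|]. destruct (HGl y); simpl; auto.
  - apply StronglySorted_inv in Hl as [Ht Hi]. rewrite Forall_forall in Hi.
    simpl. apply in_or_app.
    destruct G as [|y G]; [right; apply IH; auto; intros z []|].
    apply StronglySorted_inv in HG as [HG Hy]. rewrite Forall_forall in Hy.
    assert (HGt : forall z, In z G -> In z t).
    { intros z Hz. destruct (HGl z) as [<-|Hzt]; simpl; auto.
      specialize (Hy i Hz). assert (Hyt : In y t).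
      { destruct (HGl y) as [<-|]; simpl; auto; lia. }
      specialize (Hi y Hyt). lia. }
    destruct (Nat.eq_dec y i) as [->|Hyi].
    + left. apply in_map. apply IH; auto.
    + right. apply IH; auto; [constructor; auto; apply Forall_forall; auto|].
      intros z [Hz|Hz]; [subst z|auto].
      destruct (HGl y) as [Hiy|]; simpl; auto; congruence.
Qed.

Lemma pigeonhole_infinitely_often {A : Type} (L : list A) (Q : nat -> A -> Prop) (M : nat) :
  (forall j, M <= j -> exists z, In z L /\ Q j z) ->
  exists z, In z L /\ forall m, exists j, m <= j /\ Q j z.
Proof.
  revert M. induction L as [|z0 L IH]; intros M H.
  - destruct (H M (le_n M)) as [z [[] _]].
  - destruct (classic (forall m, exists j, m <= j /\ Q j z0)) as [Hz0|Hz0].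
    + exists z0; simpl; auto.
    + apply not_all_ex_not in Hz0 as [m0 Hm0].
      destruct (IH (max M m0)) as [z [Hz HQ]].
      * intros j Hj. destruct (H j) as [z [[<-|Hz] HQ]]; [lia| |eauto].
        exfalso. apply Hm0. exists j. split; [lia|exact HQ].
      * exists z; simpl; auto.
Qed.

Lemma increasing_enumeration (P : nat -> Prop) :
  (forall m, exists j, m <= j /\ P j) ->
  exists r : nat -> nat, (forall m, r m < r (S m)) /\ forall m, P (r m).
Proof.
  intros HP. destruct (choice _ HP) as [f Hf].
  exists (fun m => Nat.iter m (fun i => f (S i)) (f 0)). split.
  - intro m. simpl. specialize (Hf (S (Nat.iter m (fun i => f (S i)) (f 0)))). lia.
  - intros [|m]; apply Hf.
Qed.

Definition blocks (D : nat -> list nat) : Prop :=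
  (forall k, D k <> [] /\ StronglySorted lt (D k)) /\
  (forall k k' y z, k < k' -> In y (D k) -> In z (D k') -> y < z).

Definition bcomp (D E : nat -> list nat) (m : nat) : list nat := concat (map D (E m)).

Lemma blocks_concat (D : nat -> list nat) (L : list nat) :
  blocks D -> L <> [] -> StronglySorted lt L ->
  concat (map D L) <> [] /\ StronglySorted lt (concat (map D L)).
Proof.
  intros [HD1 HD2] HL HLs. split.
  - apply concat_map_nonempty; auto. intros; apply HD1.
  - apply StronglySorted_concat; auto; [intros; apply HD1|].
    intros k k' y z _ _. apply HD2.
Qed.

Lemma blocks_bcomp (D E : nat -> list nat) : blocks D -> blocks E -> blocks (bcomp D E).
Proof.
  intros HD HE. split.
  - intro m. apply blocks_concat; [exact HD|apply HE|apply HE].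
  - intros m m' y z Hm Hy Hz. unfold bcomp in *.
    apply in_concat_map in Hy as [k [Hk Hy]]. apply in_concat_map in Hz as [k' [Hk' Hz]].
    apply (proj2 HD k k'); auto. apply (proj2 HE m m'); auto.
Qed.

Lemma blocks_singletons : blocks (fun m => [m]).
Proof.
  split.
  - intro k. split; [discriminate|]. repeat constructor.
  - intros k k' y z Hk [<-|[]] [<-|[]]. exact Hk.
Qed.

Lemma blocks_intervals (p : nat -> nat) :
  (forall k, p k < p (S k)) -> blocks (fun k => interval (p k) (p (S k))).
Proof.
  intros Hp. split.
  - intro k. split; [apply interval_nonempty, Hp|apply interval_sorted].
  - intros k k' y z Hk Hy Hz. apply in_interval in Hy, Hz.
    pose proof (increasing_le p Hp (S k) k' Hk). lia.
Qed.

Definition block_below (n : nat) (l : list nat) : Prop :=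
  l <> [] /\ StronglySorted lt l /\ forall i, In i l -> i < n.

Lemma block_below_in_sublists (n : nat) (l : list nat) :
  block_below n l -> In l (sublists (seq 0 n)).
Proof.
  intros [_ [Hl Hn]]. apply in_sublists; auto.
  - replace (seq 0 n) with (interval 0 n) by (unfold interval; f_equal; lia).
    apply interval_sorted.
  - intros i Hi. apply in_seq. specialize (Hn i Hi). lia.
Qed.

Lemma block_below_intervals (p : nat -> nat) (n : nat) (l : list nat) :
  (forall k, p k < p (S k)) -> block_below n l ->
  block_below (p n) (concat (map (fun k => interval (p k) (p (S k))) l)).
Proof.
  intros Hp [Hne [Hl Hn]].
  destruct (blocks_concat _ l (blocks_intervals p Hp) Hne Hl) as [H1 H2].
  split; [exact H1|split; [exact H2|]].
  intros y Hy. apply in_concat_map in Hy as [k [Hk Hy]]. apply in_interval in Hy.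
  pose proof (increasing_le p Hp (S k) n (Hn k Hk)). lia.
Qed.

Section Semigroup.

Context {T : Type} (op : T -> T -> T).
Hypothesis op_assoc : forall x y z, op x (op y z) = op (op x y) z.

(* The value on [] is junk; only nonempty index lists are ever summed. *)
Definition lsum (x : nat -> T) (l : list nat) : T :=
  match l with [] => x 0 | i :: t => idx_sum op x i t end.

Lemma fold_left_op_assoc (x : nat -> T) (u : list nat) (c z : T) :
  fold_left (fun acc j => op acc (x j)) u (op c z) =
  op c (fold_left (fun acc j => op acc (x j)) u z).
Proof.
  revert z. induction u as [|j u IH]; intros z; simpl; [reflexivity|].
  rewrite <- op_assoc. apply IH.
Qed.

Lemma lsum_app (x : nat -> T) (l1 l2 : list nat) :
  l1 <> [] -> l2 <> [] -> lsum x (l1 ++ l2) = op (lsum x l1) (lsum x l2).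
Proof.
  destruct l1 as [|i t]; [congruence|]. destruct l2 as [|j u]; [congruence|].
  intros _ _. simpl. unfold idx_sum. rewrite fold_left_app. apply fold_left_op_assoc.
Qed.

Lemma lsum_concat (x : nat -> T) (D : nat -> list nat) (L : list nat) :
  L <> [] -> (forall k, In k L -> D k <> []) ->
  lsum x (concat (map D L)) = lsum (fun k => lsum x (D k)) L.
Proof.
  induction L as [|k L IH]; intros HL HD; [congruence|].
  destruct L as [|k' L].
  - simpl. rewrite app_nil_r. reflexivity.
  - change (k :: k' :: L) with ([k] ++ k' :: L).
    rewrite (lsum_app _ [k]) by discriminate.
    change (concat (map D ([k] ++ k' :: L))) with (D k ++ concat (map D (k' :: L))).
    rewrite lsum_app.
    + rewrite IH; [reflexivity|discriminate|intros; apply HD; simpl; auto].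
    + apply HD; simpl; auto.
    + apply concat_map_nonempty; [discriminate|intros; apply HD; simpl; auto].
Qed.

Lemma lsum_absorbed (c : T) (y : nat -> T) (L : list nat) :
  (forall k, In k L -> op c (y k) = c) -> L <> [] -> op c (lsum y L) = c.
Proof.
  induction L as [|k L IH]; intros Hc HL; [congruence|].
  destruct L as [|k' L]; [apply Hc; simpl; auto|].
  change (k :: k' :: L) with ([k] ++ k' :: L). rewrite lsum_app by discriminate.
  change (lsum y [k]) with (y k). rewrite op_assoc, (Hc k) by (simpl; auto).
  apply IH; [intros; apply Hc; simpl; auto|discriminate].
Qed.

Lemma sumsequence_blocks (a : nat -> T) (E : nat -> list nat) :
  blocks E -> sumsequence op a (fun m => lsum a (E m)).
Proof.
  intros [H1 H2]. exists (fun k => (hd 0 (E k), tl (E k))). split; [|split].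
  - intro k. unfold incr_list. simpl. destruct (H1 k) as [Hne Hs].
    destruct (E k); [congruence|exact Hs].
  - intros k y z Hy Hz. simpl in *. apply (H2 k (S k)); [lia| |].
    + destruct (H1 k) as [Hne _]. destruct (E k); [congruence|exact Hy].
    + destruct (H1 (S k)) as [Hne _]. destruct (E (S k)); [congruence|exact Hz].
  - intro k. simpl. destruct (H1 k) as [Hne _]. destruct (E k); [congruence|reflexivity].
Qed.

Lemma in_FS_block_below (b : nat -> T) (n : nat) (u : T) :
  in_FS op b n u -> exists l, block_below n l /\ u = lsum b l.
Proof.
  intros [i [t [Hs [Hn Hu]]]]. exists (i :: t). split; [|exact Hu].
  split; [discriminate|split; assumption].
Qed.

Definition FS_shift_disjoint (b : nat -> T) : Prop :=
  forall n, 1 <= n -> ~ (exists x y, in_FS op b n x /\ in_FS op b n y /\ x = op y (b n)).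

Definition good_cut (x : nat -> T) (p j : nat) : Prop :=
  ~ (exists G G', block_below p G /\ block_below p G' /\
       lsum x G = op (lsum x G') (lsum x (interval p j))).

Definition absorbing_block (x : nat -> T) (G : list nat) (B : nat -> list nat) : Prop :=
  G <> [] /\ StronglySorted lt G /\ blocks B /\
  (forall m y z, In y G -> In z (B m) -> y < z) /\
  (forall m, op (lsum x G) (lsum x (B m)) = lsum x G).

Lemma absorbing_block_of_cuts (x : nat -> T) (p : nat) (G' : list nat) (u : T) (r : nat -> nat) :
  block_below p G' -> p < r 0 -> (forall m, r m < r (S m)) ->
  (forall m, u = op (lsum x G') (lsum x (interval p (r m)))) ->
  absorbing_block x (G' ++ interval p (r 0)) (fun m => interval (r m) (r (S m))).
Proof.
  intros [HG'ne [HG' HG'p]] Hr0 Hr Hu.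
  assert (Hr0m : forall m, r 0 <= r m) by (intro m; apply increasing_le; auto; lia).
  assert (HG : lsum x (G' ++ interval p (r 0)) = u).
  { rewrite lsum_app by (auto using interval_nonempty). symmetry. apply Hu. }
  split; [|split; [|split; [|split]]].
  - intro E. apply app_eq_nil in E as [E _]. contradiction.
  - apply StronglySorted_app; auto using interval_sorted.
    intros y z Hy Hz. apply in_interval in Hz. specialize (HG'p y Hy). lia.
  - apply blocks_intervals, Hr.
  - intros m y z Hy Hz. apply in_interval in Hz. specialize (Hr0m m).
    apply in_app_or in Hy as [Hy|Hy]; [specialize (HG'p y Hy)|apply in_interval in Hy]; lia.
  - intro m. pose proof (Hr0m m). pose proof (Hr m).
    rewrite HG. rewrite (Hu m) at 1. rewrite <- op_assoc, <- lsum_app by (apply interval_nonempty; lia).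
    rewrite <- interval_app by lia. symmetry. apply Hu.
Qed.

Lemma good_cut_exists (x : nat -> T) :
  ~ (exists G B, absorbing_block x G B) -> forall p, exists j, p < j /\ good_cut x p j.
Proof.
  intros Hno p. apply NNPP. intro Hbad.
  set (witness := fun j (GG : list nat * list nat) => block_below p (snd GG) /\
         lsum x (fst GG) = op (lsum x (snd GG)) (lsum x (interval p j))).
  set (pairs := list_prod (sublists (seq 0 p)) (sublists (seq 0 p))).
  assert (Hpairs : forall j, S p <= j -> exists GG, In GG pairs /\ witness j GG).
  { intros j Hj. assert (Hnot : ~ good_cut x p j) by (intro Hg; apply Hbad; exists j; auto).
    apply NNPP in Hnot as [G [G' [HG [HG' HGG']]]]. exists (G, G'). split.
    - apply in_prod; apply block_below_in_sublists; assumption.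
    - split; assumption. }
  destruct (pigeonhole_infinitely_often pairs witness _ Hpairs) as [[G G'] [_ Hinf]].
  destruct (increasing_enumeration (fun j => p < j /\ witness j (G, G'))) as [r [Hr Hw]].
  { intro m. destruct (Hinf (max m (S p))) as [j [Hj Hwj]]. exists j. split; [lia|]. split; [lia|auto]. }
  apply Hno. exists (G' ++ interval p (r 0)), (fun m => interval (r m) (r (S m))).
  apply (absorbing_block_of_cuts x p G' (lsum x G)); auto.
  - apply (Hw 0).
  - apply Hw.
  - intro m. apply (Hw m).
Qed.

Lemma shift_disjoint_or_absorbing (x : nat -> T) :
  (exists E, blocks E /\ FS_shift_disjoint (fun m => lsum x (E m))) \/
  (exists G B, absorbing_block x G B).
Proof.
  destruct (classic (exists G B, absorbing_block x G B)) as [Habs|Hno]; [right; exact Habs|left].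
  destruct (choice _ (good_cut_exists x Hno)) as [cut Hcut].
  set (p := fun n => Nat.iter n cut 0).
  assert (Hp : forall k, p k < p (S k)) by (intro k; apply (Hcut (p k))).
  set (E := fun k => interval (p k) (p (S k))).
  exists E. split; [apply blocks_intervals, Hp|].
  intros n _ [u [v [Hu [Hv Huv]]]].
  apply in_FS_block_below in Hu as [lu [Hlu ->]]. apply in_FS_block_below in Hv as [lv [Hlv ->]].
  apply (proj2 (Hcut (p n))).
  exists (concat (map E lu)), (concat (map E lv)).
  split; [apply block_below_intervals; auto|split; [apply block_below_intervals; auto|]].
  rewrite !lsum_concat by (apply Hlu || apply Hlv || (intros; apply interval_nonempty, Hp)).
  exact Huv.
Qed.

Lemma absorbing_of_no_shift_disjoint (a : nat -> T) :
  ~ (exists E, blocks E /\ FS_shift_disjoint (fun m => lsum a (E m))) ->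
  forall D, blocks D -> exists G B, absorbing_block (fun k => lsum a (D k)) G B.
Proof.
  intros Hno D HD.
  destruct (shift_disjoint_or_absorbing (fun k => lsum a (D k))) as [[E [HE H2]]|Habs];
    [|exact Habs].
  exfalso. apply Hno. exists (bcomp D E). split; [apply blocks_bcomp; auto|].
  replace (fun m => lsum a (bcomp D E m))
    with (fun m => lsum (fun k => lsum a (D k)) (E m)); [exact H2|].
  apply functional_extensionality. intro m. symmetry.
  apply lsum_concat; [apply HE|intros; apply HD].
Qed.

Section AbsorbingChain.

Variable a : nat -> T.
Variable next : (nat -> list nat) -> list nat * (nat -> list nat).
Hypothesis next_absorbing : forall D, blocks D ->
  absorbing_block (fun k => lsum a (D k)) (fst (next D)) (snd (next D)).

Definition level (n : nat) : nat -> list nat :=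
  Nat.iter n (fun D => bcomp D (snd (next D))) (fun m => [m]).

Lemma level_S (n : nat) : level (S n) = bcomp (level n) (snd (next (level n))).
Proof. reflexivity. Qed.

Lemma blocks_level (n : nat) : blocks (level n).
Proof.
  induction n as [|n IH]; [apply blocks_singletons|].
  destruct (next_absorbing _ IH) as [_ [_ [HB _]]].
  rewrite level_S. apply blocks_bcomp; assumption.
Qed.

Definition head_block (n : nat) : list nat := concat (map (level n) (fst (next (level n)))).

Lemma head_block_sorted (n : nat) : head_block n <> [] /\ StronglySorted lt (head_block n).
Proof.
  destruct (next_absorbing _ (blocks_level n)) as [HG [HGs _]].
  apply blocks_concat; auto using blocks_level.
Qed.

Definition dominated (n : nat) (l : list nat) : Prop :=
  (forall y z, In y (head_block n) -> In z l -> y < z) /\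
  op (lsum a (head_block n)) (lsum a l) = lsum a (head_block n).

Lemma dominated_concat (n : nat) (D : nat -> list nat) (L : list nat) :
  L <> [] -> (forall k, In k L -> D k <> [] /\ dominated n (D k)) ->
  dominated n (concat (map D L)).
Proof.
  intros HL HD. split.
  - intros y z Hy Hz. apply in_concat_map in Hz as [k [Hk Hz]].
    apply (proj1 (proj2 (HD k Hk))); assumption.
  - rewrite lsum_concat; [|exact HL|intros k Hk; apply (proj1 (HD k Hk))].
    apply lsum_absorbed; [|exact HL]. intros k Hk. apply (proj2 (proj2 (HD k Hk))).
Qed.

Lemma dominated_level (n k m : nat) : n < k -> dominated n (level k m).
Proof.
  intros Hk. revert m. induction Hk as [|k Hk IH]; intro m; rewrite level_S; unfold bcomp.
  - destruct (next_absorbing _ (blocks_level n)) as [HG [_ [[HB _] [HGB Habs]]]].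
    destruct (blocks_level n) as [Hlev Hlev_lt].
    split.
    + intros y z Hy Hz. unfold head_block in Hy.
      apply in_concat_map in Hy as [k [Hk Hy]]. apply in_concat_map in Hz as [k' [Hk' Hz]].
      apply (Hlev_lt k k'); auto. apply (HGB m); assumption.
    + unfold head_block. rewrite !lsum_concat.
      * apply Habs.
      * apply (HB m).
      * intros; apply Hlev.
      * exact HG.
      * intros; apply Hlev.
  - apply dominated_concat.
    + destruct (next_absorbing _ (blocks_level k)) as [_ [_ [[HB _] _]]]. apply (HB m).
    + intros j _. split; [apply (blocks_level k)|apply IH].
Qed.

Lemma dominated_head_block (n n' : nat) : n < n' -> dominated n (head_block n').
Proof.
  intros Hn. destruct (next_absorbing _ (blocks_level n')) as [HG _].
  apply dominated_concat; [exact HG|].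
  intros k _. split; [apply (blocks_level n')|apply dominated_level; exact Hn].
Qed.

Lemma absorbing_chain_sumsequence :
  exists b, sumsequence op a b /\ forall n m, n < m -> op (b n) (b m) = b n.
Proof.
  exists (fun n => lsum a (head_block n)). split.
  - apply sumsequence_blocks. split; [apply head_block_sorted|].
    intros n n' y z Hn Hy Hz. apply (proj1 (dominated_head_block n n' Hn)); assumption.
  - intros n m Hnm. apply (dominated_head_block n m Hnm).
Qed.

End AbsorbingChain.

End Semigroup.

Theorem lemma5p1 (S : Type) (op : S -> S -> S)
  (op_assoc : forall x y z, op x (op y z) = op (op x y) z)
  (a : nat -> S) :
  exists b : nat -> S, sumsequence op a b /\
    ((forall n m, n < m -> op (b n) (b m) = b n) \/
     (forall n, 1 <= n ->
        ~ (exists x y, in_FS op b n x /\ in_FS op b n y /\ x = op y (b n)))).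
Proof.
  destruct (classic (exists E, blocks E /\ FS_shift_disjoint op (fun m => lsum op a (E m))))
    as [[E [HE Hdisj]]|Hno].
  - exists (fun m => lsum op a (E m)).
    split; [apply sumsequence_blocks, HE|right; exact Hdisj].
  - assert (Hnext : forall D, exists GB : list nat * (nat -> list nat), blocks D ->
              absorbing_block op (fun k => lsum op a (D k)) (fst GB) (snd GB)).
    { intro D. destruct (classic (blocks D)) as [HD|HD]; [|exists ([], D); tauto].
      destruct (absorbing_of_no_shift_disjoint op op_assoc a Hno D HD) as [G [B HGB]].
      exists (G, B). auto. }
    destruct (choice _ Hnext) as [next Hnext_absorbing].
    destruct (absorbing_chain_sumsequence op op_assoc a next Hnext_absorbing) as [b [Hb Habs]].
    exists b. split; [exact Hb|left; exact Habs].
Qed.
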